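(* For all morphisms $(\varphi,g,f),(\psi,g_1,f_1):(A,Z,p)\to(A_1,Z_1,p_1)$ in $\mathsf C(\mathcal A,\mathcal P,\mathcal X)$, one has $f=f_1$ if and only if $\varphi^{\vee}=\psi^{\vee}$, where $\varphi^{\vee}(a)=\bigvee\{\varphi(b)\mid b\in\mathbb B_p,\ b\ll_p a\}$ (and similarly for $\psi$).
   Context: $\mathsf C(\mathcal A,\mathcal P,\mathcal X)$: objects are triples $(A,Z,p)$ with $A$ a complete Boolean algebra, $Z$ an open dense subset of the Stone space $\mathrm{Ult}(A)$ (basic clopen sets $\varepsilon_A(a)=\{\mathfrak u\mid a\in\mathfrak u\}$), and $p:Z\to Y$ a perfect irreducible continuous surjection onto a locally compact Hausdorff space $Y$; a morphism $(\varphi,g,f):(A,Z,p)\to(A_1,Z_1,p_1)$ consists of a Boolean homomorphism $\varphi:A\to A_1$, the map $g:Z_1\to Z$, $g(\mathfrak u')=\varphi^{-1}(\mathfrak u')$, and a map $f:Y_1\to Y$ with $p\circ g=f\circ p_1$. On $A$ one has the contact relation $a\,C_p\,b$ iff $p(\varepsilon_A(a)\cap Z)\cap p(\varepsilon_A(b)\cap Z)\neq\emptyset$, with $a\ll_p b$ iff not $a\,C_p\,b^*$, and the ideal of bounded elements $\mathbb B_p=\{a\in A\mid\varepsilon_A(a)\subseteq Z\}$. *)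

From HB Require Import structures.
From mathcomp Require Import all_boot all_order.
From mathcomp Require Import boolp classical_sets topology.
Set Implicit Arguments. Unset Strict Implicit. Unset Printing Implicit Defensive.
Import Order.TTheory.
Local Open Scope classical_set_scope.

Section BooleanAlgebras.
Context {d : Order.disp_t} (A : ctbDistrLatticeType d).

Definition complete_BA : Prop := forall S : set A, supremums S !=set0.

(** Join of a subset (well defined when A is complete). *)
Definition bigjoin (S : set A) : A := supremum \bot%O S.

Definition BA_filter (u : set A) : Prop :=
  [/\ u \top%O,
      (forall a b, u a -> (a <= b)%O -> u b) &
      (forall a b, u a -> u b -> u (Order.meet a b))].

Definition ultrafilter (u : set A) : Prop :=
  [/\ BA_filter u, ~ u \bot%O &
      (forall v, BA_filter v -> ~ v \bot%O -> u `<=` v -> v = u)].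

Definition ult := {u : set A | ultrafilter u}.
HB.instance Definition _ := gen_eqMixin ult.
HB.instance Definition _ := gen_choiceMixin ult.

Definition eps (a : A) : set ult := [set u | sval u a].

Definition eps_base (i : option A) : set ult :=
  if i is Some a then eps a else setT.
HB.instance Definition _ :=
  @isSubBaseTopological.Build ult (option A) setT eps_base.

End BooleanAlgebras.

Definition bool_hom {d1 d2 : Order.disp_t} (A : ctbDistrLatticeType d1)
  (B : ctbDistrLatticeType d2) (phi : A -> B) : Prop :=
  [/\ forall a b, phi (Order.meet a b) = Order.meet (phi a) (phi b),
      forall a b, phi (Order.join a b) = Order.join (phi a) (phi b),
      forall a, phi (Order.compl a) = Order.compl (phi a),
      phi \bot%O = \bot%O & phi \top%O = \top%O].

(** p : Z -> Y perfect irreducible continuous surjection (Z open dense in Ult A),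
    Y locally compact Hausdorff. The relatively closed subsets of Z are the
    C `&` Z with C closed in Ult(A). *)
Definition C_object {d : Order.disp_t} (A : ctbDistrLatticeType d)
  (Z : set (ult A)) (Y : topologicalType) (p : ult A -> Y) : Prop :=
  [/\ complete_BA A,
      open Z /\ dense Z,
      hausdorff_space Y /\ locally_compact [set: Y],
      {within Z, continuous p} /\ p @` Z = setT &
      [/\ (* perfect: closed map with compact fibres *)
          (forall C : set (ult A), closed C -> closed (p @` (C `&` Z))),
          (forall y : Y, compact (Z `&` p @^-1` [set y])) &
          (* irreducible: no proper closed subset of Z maps onto Y *)
          (forall C : set (ult A), closed C -> p @` (C `&` Z) = setT ->
             Z `<=` C)]].

Definition C_morphism {d d1 : Order.disp_t}
  (A : ctbDistrLatticeType d) (Z : set (ult A)) (Y : topologicalType)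
  (p : ult A -> Y)
  (A1 : ctbDistrLatticeType d1) (Z1 : set (ult A1)) (Y1 : topologicalType)
  (p1 : ult A1 -> Y1)
  (phi : A -> A1) (g : ult A1 -> ult A) (f : Y1 -> Y) : Prop :=
  [/\ bool_hom phi,
      (forall u' : ult A1, sval (g u') = phi @^-1` (sval u')),
      (forall u' : ult A1, Z1 u' -> Z (g u')) &
      (forall u' : ult A1, Z1 u' -> p (g u') = f (p1 u'))].

Section Contact.
Context {d : Order.disp_t} (A : ctbDistrLatticeType d) (Z : set (ult A))
  (Y : topologicalType) (p : ult A -> Y).

Definition contact (a b : A) : Prop :=
  p @` (eps a `&` Z) `&` p @` (eps b `&` Z) !=set0.

Definition wbelow (a b : A) : Prop := ~ contact a (Order.compl b).

Definition bounded (a : A) : Prop := eps a `<=` Z.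

End Contact.

Definition vee {d d1 : Order.disp_t} (A : ctbDistrLatticeType d)
  (Z : set (ult A)) (Y : topologicalType) (p : ult A -> Y)
  (A1 : ctbDistrLatticeType d1) (phi : A -> A1) (a : A) : A1 :=
  bigjoin [set phi b | b in [set b | bounded Z b /\ wbelow Z p b a]].

From HB Require Import structures.
From mathcomp Require Import all_boot all_order.
From mathcomp Require Import boolp classical_sets topology.
From mathcomp Require finmap.
Set Implicit Arguments.
Unset Strict Implicit.
Unset Printing Implicit Defensive.
Import Order.Theory.
Local Open Scope classical_set_scope.

(* Since p1 maps Z1 onto Y1 and p o g = f o p1, f = f1 says exactly that
   p o g = p o g1 on Z1.  The key fact: for u in Z1, phi^vee(a) lies in u as
   soon as p(g u) avoids the set p(eps(a^* ) `&` Z), which is closed because p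
   is perfect; a clopen eps(c) around g u inside the preimage of its complement
   gives a bounded c <<_p a with phi(c) in u.
   If p o g = p o g1 on Z1 and b <<_p a with phi(b) in u, then
   p(g1 u) = p(g u) lies in p(eps(b) `&` Z), hence avoids p(eps(a^* ) `&` Z),
   so psi^vee(a) is in u; density of Z1 yields phi(b) <= psi^vee(a).
   Conversely, if p(g u) <> p(g1 u), separate them and pick c in g1 u with
   p(eps(c) `&` Z) avoiding p(g u): then phi^vee(c^* ) is in u, while
   psi^vee(c^* ) <= psi(c)^* is not. *)

Section Ultrafilters.
Context {d : Order.disp_t} (A : ctbDistrLatticeType d).
Implicit Types (u : ult A) (a b x y : A).

Lemma ult_top u : sval u \top%O.
Proof. by case: (svalP u) => -[]. Qed.

Lemma ult_bot u : ~ sval u \bot%O.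
Proof. by case: (svalP u). Qed.

Lemma ult_le u a b : sval u a -> (a <= b)%O -> sval u b.
Proof. by case: (svalP u) => -[_ + _] _ _; apply. Qed.

Lemma ult_meetE u a b : sval u (a `&` b)%O <-> sval u a /\ sval u b.
Proof.
split=> [uab|[]]; last by case: (svalP u) => -[_ _ +] _ _; apply.
by split; apply: ult_le uab _; rewrite ?leIl ?leIr.
Qed.

Lemma le_compl_of_meet_eq0 a b : (a `&` b)%O = \bot%O -> (a <= ~` b)%O.
Proof. by move=> ab0; rewrite complEdiff -meet_eq0E_diff ?lex1 // ab0. Qed.

Lemma ult_complE u a : sval u (~` a)%O <-> ~ sval u a.
Proof.
split=> [uca ua|nua].
  by apply: (@ult_bot u); rewrite -(meetxC a); apply/ult_meetE.
pose v := [set x | exists2 w, sval u w & (w `&` a <= x)%O].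
have vF : BA_filter v.
  split; first by exists \top%O; [exact: ult_top | rewrite lex1].
    by move=> x y [w uw wx] xy; exists w => //; apply: le_trans xy.
  move=> x y [w1 uw1 w1x] [w2 uw2 w2y]; exists (w1 `&` w2)%O.
    exact/ult_meetE.
  rewrite lexI (le_trans _ w1x) ?(le_trans _ w2y) //.
    by rewrite leI2 ?leIr.
  by rewrite leI2 ?leIl.
have [[w uw w0]|nvb] := pselect (v \bot%O).
  apply: ult_le uw _; apply: le_compl_of_meet_eq0.
  by apply/eqP; rewrite eq_le w0 le0x.
have uv : sval u `<=` v by move=> x ux; exists x; rewrite ?leIl.
case: (svalP u) => _ _ /(_ v vF nvb uv) vu; exfalso; apply: nua.
by rewrite -vu; exists \top%O; [exact: ult_top | rewrite meetC meetx1].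
Qed.

Lemma eps_compl a : eps (~` a)%O = ~` eps a.
Proof. by apply/seteqP; split=> u /ult_complE. Qed.

Lemma eps_meet a b : eps (a `&` b)%O = eps a `&` eps b.
Proof. by apply/seteqP; split=> u /ult_meetE. Qed.

Lemma eps_open a : open (eps a).
Proof.
exists [set eps a]; last by rewrite bigcup_set1.
by move=> _ ->; exact: (@finI_from1 _ _ setT (@eps_base _ A) (Some a)).
Qed.

Lemma eps_closed a : closed (eps a).
Proof. by rewrite -[a]complK eps_compl; apply/open_closedC/eps_open. Qed.

Lemma bigcap_eps_base (s : seq (option A)) :
  \bigcap_(i in [set` s]) @eps_base _ A i
  = eps ((\meet_(i <- s) odflt \top i)%O).
Proof.
elim: s => [|i s IHs].
  by rewrite big_nil; apply/seteqP; split=> u _ //; exact: ult_top.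
rewrite big_cons eps_meet -IHs; apply/seteqP; split=> u.
  move=> ui; split; last by move=> j js; apply: ui; rewrite /= inE js orbT.
  by have := ui i (mem_head i s); case: i {ui} => [a|] //= _; apply: ult_top.
by move=> [uai us] j /=; rewrite inE => /orP[/eqP->|]; [case: i uai|apply: us].
Qed.

Lemma open_eps_nbhs (W : set (ult A)) u : open W -> W u ->
  exists2 b, sval u b & eps b `<=` W.
Proof.
move=> [F basicF <-] [V FV Vu]; have [D _ DV] := basicF V FV.
have [b Vb] : exists b, V = eps b.
  by exists ((\meet_(i <- finmap.enum_fset D) odflt \top i)%O);
     rewrite -DV -bigcap_eps_base.
by exists b; [rewrite Vb in Vu | rewrite -Vb => v Vv; exists V].
Qed.

Lemma ult_exists x : x != \bot%O -> exists u, sval u x.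
Proof.
move=> x0.
(* The guard makes the empty chain harmless for Zorn's lemma. *)
pose P (S : set A) := S !=set0 -> [/\ BA_filter S, ~ S \bot%O & S x].
have [M [PM Mmax]] : exists M, P M /\ forall S, M `<` S -> ~ P S.
  apply: Zorn_bigcup => F FP Ftot [a [X FX Xa]].
  have PF S : F S -> forall b, S b -> [/\ BA_filter S, ~ S \bot%O & S x].
    by move=> FS b Sb; apply: FP => //; exists b.
  have [_ _ Xx] := PF X FX a Xa.
  split; last by exists X.
  - split; first by have [[Xtop _ _] _ _] := PF X FX a Xa; exists X.
      move=> b c [S FS Sb] bc; exists S => //.
      by have [[_ Sup _] _ _] := PF S FS b Sb; apply: Sup bc.
    move=> b c [S FS Sb] [S' FS' S'c].
    have [SS'|S'S] := Ftot _ _ FS FS'.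
      exists S' => //; have [[_ _ S'I] _ _] := PF S' FS' c S'c.
      by apply: S'I => //; apply: SS'.
    exists S => //; have [[_ _ SI] _ _] := PF S FS b Sb.
    by apply: SI => //; apply: S'S.
  - by move=> [S FS Sb]; have [] := PF S FS _ Sb.
pose up := [set y | (x <= y)%O].
have Pup : P up.
  move=> _; split; last exact: lexx.
  - split; [exact: lex1 | by move=> b c xb /(le_trans xb) |].
    by move=> b c xb xc; rewrite /up /= lexI xb xc.
  - by rewrite /up /= lex0; apply/negP.
have Mne : M !=set0.
  apply/set0P/negP => /eqP M0; apply: (Mmax up) => //.
  rewrite M0 properEneq; split=> //; apply/eqP => up0.
  by move/seteqP: up0 => [_ /(_ x (lexx x))].
have [MF Mbot Mx] := PM Mne.
have uM : ultrafilter M.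
  split=> // v vF vbot Mv; apply: contrapT => vM; apply: (Mmax v).
    by rewrite properEneq; split=> //; apply/eqP => vM'; apply: vM.
  by move=> _; split=> //; apply: Mv.
by exists (exist _ M uM).
Qed.

Lemma le_of_ult (Z : set (ult A)) x y : dense Z ->
  (forall u, Z u -> sval u x -> sval u y) -> (x <= y)%O.
Proof.
move=> dZ xy; apply: contrapT => /negP nxy.
have xcy0 : (x `&` ~` y)%O != \bot%O.
  by apply: contraNN nxy => /eqP/le_compl_of_meet_eq0; rewrite complK.
have [w wxcy] := ult_exists xcy0.
have [u [/ult_meetE[ux /ult_complE uy] Zu]] :=
  dZ _ (ex_intro _ w wxcy) (eps_open _).
exact/uy/xy.
Qed.

Hypothesis complA : complete_BA A.

Lemma le_bigjoin (S : set A) x : S x -> (x <= bigjoin S)%O.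
Proof.
rewrite /bigjoin /supremum; case: ifP => [/eqP -> //|_ Sx].
by have [+ _] := xgetPex \bot%O (complA S); apply.
Qed.

Lemma bigjoin_le (S : set A) y :
  (forall x, S x -> (x <= y)%O) -> (bigjoin S <= y)%O.
Proof.
rewrite /bigjoin /supremum; case: ifP => [_|_] Sy; first exact: le0x.
by have [_ +] := xgetPex \bot%O (complA S); apply.
Qed.

End Ultrafilters.

Lemma bool_hom_mono {d d1 : Order.disp_t} (A : ctbDistrLatticeType d)
    (A1 : ctbDistrLatticeType d1) (phi : A -> A1) :
  bool_hom phi -> {homo phi : a b / (a <= b)%O}.
Proof. by case=> phiI _ _ _ _ a b ab; rewrite -(meet_l ab) phiI leIr. Qed.

Section Objects.
Context {d : Order.disp_t} (A : ctbDistrLatticeType d) (Z : set (ult A))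
  (Y : topologicalType) (p : ult A -> Y).

Lemma wbelow_le a b : dense Z -> wbelow Z p a b -> (a <= b)%O.
Proof.
move=> dZ ab; apply: (le_of_ult dZ) => u Zu ua.
apply: contrapT => /ult_complE ucb.
by apply: ab; exists (p u); split; exists u.
Qed.

Lemma vee_le {d1 : Order.disp_t} (A1 : ctbDistrLatticeType d1)
    (phi : A -> A1) a :
  complete_BA A1 -> dense Z -> bool_hom phi -> (vee Z p phi a <= phi a)%O.
Proof.
move=> complA1 dZ hphi; apply: bigjoin_le => // _ [b [_ ba] <-].
exact/(bool_hom_mono hphi)/(wbelow_le dZ).
Qed.

Lemma eps_nbhs_preimage (V : set Y) u : open Z -> {within Z, continuous p} ->
  open V -> Z u -> V (p u) -> exists2 c, sval u c & eps c `<=` Z `&` p @^-1` V.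
Proof.
move=> oZ cp oV Zu Vpu; apply: open_eps_nbhs => //.
move: cp; rewrite continuous_open_subspace //.
by move=> /(continuous_inP p oZ); apply.
Qed.

Lemma bounded_wbelow_nbhs a u : C_object Z p -> Z u ->
  ~ (p @` (eps (~` a)%O `&` Z)) (p u) ->
  exists c, [/\ sval u c, bounded Z c & wbelow Z p c a].
Proof.
move=> [_ [oZ _] _ [cp _] [closed_map _ _]] Zu pu.
have oV : open (~` (p @` (eps (~` a)%O `&` Z))).
  exact/closed_openC/closed_map/eps_closed.
have [c uc cV] := eps_nbhs_preimage oZ cp oV Zu pu.
exists c; split=> // [v /cV[] //|].
by move=> [_ [[v [vc _] <-] ca]]; have [_] := cV v vc.
Qed.

End Objects.

Section Morphisms.
Context {d d1 : Order.disp_t}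
  (A : ctbDistrLatticeType d) (Z : set (ult A)) (Y : topologicalType)
  (p : ult A -> Y)
  (A1 : ctbDistrLatticeType d1) (Z1 : set (ult A1)) (Y1 : topologicalType)
  (p1 : ult A1 -> Y1)
  (hobj : C_object Z p) (hobj1 : C_object Z1 p1).

Lemma vee_mem (phi : A -> A1) g f a u : C_morphism Z p Z1 p1 phi g f ->
  Z1 u -> ~ (p @` (eps (~` a)%O `&` Z)) (p (g u)) -> sval u (vee Z p phi a).
Proof.
move=> [_ gE gZ _] Z1u pgu; have [complA1 _ _ _ _] := hobj1.
have [c [gc cB ca]] := bounded_wbelow_nbhs hobj (gZ u Z1u) pgu.
have uc : sval u (phi c) by move: gc; rewrite gE.
by apply: ult_le uc (le_bigjoin complA1 _); exists c.
Qed.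

Context (phi psi : A -> A1) (g g1 : ult A1 -> ult A) (f f1 : Y1 -> Y)
  (hmor : C_morphism Z p Z1 p1 phi g f)
  (hmor1 : C_morphism Z p Z1 p1 psi g1 f1).

Lemma morphism_maps_eqE :
  f = f1 <-> forall u, Z1 u -> p (g u) = p (g1 u).
Proof.
have [_ _ gZ gp] := hmor; have [_ _ g1Z g1p] := hmor1.
split=> [ff1 u Z1u|pg]; first by rewrite gp // g1p // ff1.
have [_ _ _ [_ p1Z1] _] := hobj1.
apply: funext => y; have [u Z1u <-] : (p1 @` Z1) y by rewrite p1Z1.
by rewrite -gp // -g1p // pg.
Qed.

Lemma vee_le_of_maps_eq : (forall u, Z1 u -> p (g u) = p (g1 u)) ->
  forall a, (vee Z p phi a <= vee Z p psi a)%O.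
Proof.
move=> pg a; have [complA1 [_ dZ1] _ _ _] := hobj1.
have [_ gE gZ _] := hmor.
apply: bigjoin_le => // _ [b [_ ba] <-]; apply: (le_of_ult dZ1) => u Z1u ub.
apply: (vee_mem hmor1 Z1u); rewrite -pg // => pgu; apply: ba.
have gub : eps b (g u) by rewrite /eps /= gE.
by exists (p (g u)); split=> //; exists (g u) => //; split=> //; apply: gZ.
Qed.

Lemma maps_eq_of_vee_eq : vee Z p phi = vee Z p psi ->
  forall u, Z1 u -> p (g u) = p (g1 u).
Proof.
move=> veq u Z1u; apply: contrapT => /nesym/eqP pgu.
have [_ [oZ dZ] [hausY _] [cp _] _] := hobj.
have [complA1 _ _ _ _] := hobj1.
have [hpsi g1E g1Z _] := hmor1.
have [V [oV /set_mem pg1V /set_mem pgV]] := hausdorff_accessible hausY pgu.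
have [c g1c cV] := eps_nbhs_preimage oZ cp oV (g1Z u Z1u) pg1V.
have : sval u (vee Z p phi (~` c)%O).
  apply: (vee_mem hmor Z1u); rewrite complK => -[v [vc _] pv].
  by apply: pgV; rewrite -pv; have [] := cV v vc.
rewrite veq => /ult_le /(_ (vee_le _ _ complA1 dZ hpsi)).
have [_ _ -> _ _] := hpsi; move/ult_complE; apply.
by move: g1c; rewrite g1E.
Qed.

End Morphisms.

Theorem lemma3p16 {d d1 : Order.disp_t}
  (A : ctbDistrLatticeType d) (Z : set (ult A)) (Y : topologicalType)
  (p : ult A -> Y)
  (A1 : ctbDistrLatticeType d1) (Z1 : set (ult A1)) (Y1 : topologicalType)
  (p1 : ult A1 -> Y1)
  (hobj : C_object Z p) (hobj1 : C_object Z1 p1)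
  (phi : A -> A1) (g : ult A1 -> ult A) (f : Y1 -> Y)
  (psi : A -> A1) (g1 : ult A1 -> ult A) (f1 : Y1 -> Y)
  (hmor : C_morphism Z p Z1 p1 phi g f)
  (hmor1 : C_morphism Z p Z1 p1 psi g1 f1) :
  f = f1 <-> vee Z p phi = vee Z p psi.
Proof.
rewrite (morphism_maps_eqE hobj1 hmor hmor1).
split=> [pg|veq]; last exact: (maps_eq_of_vee_eq hobj hobj1 hmor hmor1).
apply: funext => a; apply/le_anti/andP; split.
  exact: (vee_le_of_maps_eq hobj hobj1 hmor hmor1).
by apply: (vee_le_of_maps_eq hobj hobj1 hmor1 hmor) => u /pg.
Qed.
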